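(* Let $c\ge 1$ and $d\ge 1$ be integers with $f=d/(2c)\le 1$, and set $\nu=\lfloor\sqrt{2/f}\rfloor$ if $\lfloor\sqrt{2/f}\rfloor\ge 2$, and $\nu=2$ otherwise. Then a single ring on the cycle $C_\nu$ with capacity $c$ on every edge can carry uniform traffic of $d$ units between every pair of its $\nu$ vertices; that is, there exist nonnegative integers $t^0_{jk},t^1_{jk}$ for $1\le j<k\le\nu$ with $t^0_{jk}+t^1_{jk}=d$, where $t^0_{jk}$ and $t^1_{jk}$ are routed on the two arcs of $C_\nu$ between $j$ and $k$, such that for every edge of $C_\nu$ the total traffic on arcs containing that edge is at most $c$.
   Context: $C_\nu$ denotes the cycle graph on vertices $1,\dots,\nu$ in cyclic order (edges $\{l,l+1\}$ for $1\le l<\nu$ and $\{\nu,1\}$; for $\nu=2$ it has two parallel edges, so that the two arcs between vertices $1$ and $2$ are distinct edges). *)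

From mathcomp Require Import all_boot.
Set Implicit Arguments. Unset Strict Implicit. Unset Printing Implicit Defensive.

(* Cycle C_nu, vertices 0..nu-1 (paper's 1..nu shifted by one).
   Edge l (0 <= l < nu) joins l and (l+1) mod nu; for nu = 2 edges 0 and 1
   are the two distinct parallel edges between vertices 0 and 1.
   For a pair j < k, arc 0 between j and k is the path j, j+1, ..., k,
   i.e. it uses exactly the edges l with j <= l < k; arc 1 is the
   complementary path k, k+1, ..., nu-1, 0, ..., j, using the other edges. *)
Definition on_arc0 (j k l : nat) : bool := (j <= l) && (l < k).

Definition edge_load (nu : nat) (t0 t1 : nat -> nat -> nat) (l : nat) : nat :=
  \sum_(0 <= k < nu) \sum_(0 <= j < k)
     (if on_arc0 j k l then t0 j k else t1 j k).

(* m is floor(sqrt(2/f)) where f = d/(2c), i.e. floor(sqrt(4c/d)):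
   m^2 <= 4c/d < (m+1)^2. *)
Definition is_floor_sqrt_2_over_f (c d m : nat) : Prop :=
  m ^ 2 * d <= 4 * c < m.+1 ^ 2 * d.

Definition ring_size (m : nat) : nat := if 2 <= m then m else 2.

(* For a ring of size [m >= 2], route every pair on its arc [j, j+1, ..., k].
   Edge [l] is then crossed by the [(l+1)(m-l-1)] pairs with [j <= l < k],
   and [4(l+1)(m-l-1) <= m^2 <= 4c/d] by AM-GM, so each edge carries at most
   [c].  For the two-vertex ring the single demand is split evenly over the
   two parallel edges, each getting at most [ceil(d/2) <= c]. *)
From mathcomp Require Import all_boot.
From mathcomp Require Import zify.

Lemma sum_leq_indicator (l k : nat) :
  \sum_(0 <= j < k) (j <= l) = minn k l.+1.
Proof.
elim: k => [|k IHk]; first by rewrite big_nil.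
by rewrite big_nat_recr //= IHk; case: (leqP k l) => ?; lia.
Qed.

Lemma count_pairs_across_edge (n l : nat) :
  \sum_(0 <= k < n) \sum_(0 <= j < k) on_arc0 j k l = l.+1 * (n - l.+1).
Proof.
elim: n => [|n IHn]; first by rewrite big_nil muln0.
rewrite big_nat_recr //= IHn.
have -> : \sum_(0 <= j < n) on_arc0 j n l = (l < n) * l.+1.
  case: (ltnP l n) => Hln.
  - rewrite mul1n -[l.+1](minn_idPr Hln) -sum_leq_indicator.
    by apply: eq_bigr => j _; rewrite /on_arc0 Hln andbT.
  - by rewrite big1 // => j _; rewrite /on_arc0 ltnNge Hln andbF.
rewrite subSS; case: (ltnP l n) => Hln.
- by rewrite mul1n -[n - l](subnSK Hln) mulnS addnC.
- by rewrite /= mul0n addn0 subnS; move: Hln; rewrite -subn_eq0 => /eqP->.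
Qed.

Lemma edge_load_arc0 (n d l : nat) :
  edge_load n (fun _ _ => d) (fun _ _ => 0) l = l.+1 * (n - l.+1) * d.
Proof.
rewrite -count_pairs_across_edge big_distrl /=.
apply: eq_bigr => k _; rewrite big_distrl /=.
by apply: eq_bigr => j _; case: on_arc0; rewrite ?mul1n ?mul0n.
Qed.

Lemma edge_load_size2 (t0 t1 : nat -> nat -> nat) (l : nat) :
  l < 2 -> edge_load 2 t0 t1 l = if l == 0 then t0 0 1 else t1 0 1.
Proof. by case: l => [|[|l]] // _; rewrite /edge_load !big_nat_recr //= !big_nil. Qed.

Theorem lemma1 (c d m : nat) :
  1 <= c -> 1 <= d -> d <= 2 * c ->
  is_floor_sqrt_2_over_f c d m ->
  exists t0 t1 : nat -> nat -> nat,
    (forall j k, j < k < ring_size m -> t0 j k + t1 j k = d) /\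
    (forall l, l < ring_size m -> edge_load (ring_size m) t0 t1 l <= c).
Proof.
move=> _ _ d_le_2c /andP [m2d_le_4c _]; rewrite /ring_size.
case: (leqP 2 m) => _.
- exists (fun _ _ => d), (fun _ _ => 0); split=> [j k _|l Hl]; first exact: addn0.
  rewrite edge_load_arc0 -(leq_pmul2l (isT : 0 < 4)) mulnA.
  have := (nat_AGM2 l.+1 (m - l.+1)).1; rewrite subnKC // => agm.
  by apply: leq_trans m2d_le_4c; rewrite leq_mul2r agm orbT.
- exists (fun _ _ => d - d./2), (fun _ _ => d./2); split=> [j k _|l Hl].
    by rewrite subnK // -divn2 leq_div.
  by rewrite edge_load_size2 //; case: eqP => _; lia.
Qed.
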